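(* Let $G$ be a plane graph with a face $f$ whose facial walk $v_1v_2\dots v_rv_1$ has length $r\ge3$, and let $G'$ be obtained from $G$ by attaching a web to $f$. Then (i) for any $u,v\in V(G)$, $\mathrm{dist}_{G'}(u,v)=\mathrm{dist}_G(u,v)$, and moreover no shortest $(u,v)$-path in $G'$ contains an inner vertex of the attached web; (ii) for every vertex $v$ of the attached web there is a vertex $u\in V(G)$ with $\mathrm{dist}_{G'}(u,v)\le r$.
   Context: For $r\ge3$, the web $W_r(v_1,\dots,v_r)$ is the graph constructed as follows: take vertices $v_1,\dots,v_r$ and $u$; for each $i\in\{1,\dots,r\}$ add a path $x^i_0x^i_1\dots x^i_r$ of length $r$ with $x^i_0=v_i$ and $x^i_r=u$; for each $j\in\{1,\dots,r-1\}$ add the cycle $x^1_jx^2_j\dots x^r_jx^1_j$; for each $i\in\{1,\dots,r\}$ and $j\in\{1,\dots,r-1\}$ add the edge $\{x^{i-1}_{j-1},x^i_j\}$, where indices are such that $x^0_j=x^r_j$. The inner vertices of the web are all its vertices other than $v_1,\dots,v_r$. Attaching a web to a face $f$ with facial walk $v_1\dots v_rv_1$ means adding a copy of $W_r(v_1,\dots,v_r)$ whose vertices $v_1,\dots,v_r$ are identified with the vertices of the facial walk (vertices may repeat in the walk) and drawing it inside $f$ without crossings, with the concentric cycles nested around the center $u$. Distances are unweighted shortest-path distances. *)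

From HB Require Import structures.
From mathcomp Require Import all_boot.
Set Implicit Arguments. Unset Strict Implicit. Unset Printing Implicit Defensive.

Definition simple_graph (T : finType) (e : rel T) : Prop :=
  symmetric e /\ irreflexive e.

Definition closed_walk (T : finType) (e : rel T) r (w : 'I_r -> T) : Prop :=
  forall i : 'I_r, e (w i) (w (ordS i)).

Definition is_dist (T : Type) (e : rel T) (x y : T) (d : nat) : Prop :=
  (exists p : seq T, path e x p /\ last x p = y /\ size p = d) /\
  (forall p : seq T, path e x p -> last x p = y -> d <= size p).

Definition layer (r : nat) := {j : 'I_r | 0 < val j}.

(* Vertex set of G' : old vertices (inl), inner web vertices x^i_j (inr (Some (i,j)))
   for j in 1..r-1, and the center u (inr None). *)
Definition Vtx (T : finType) (r : nat) : finType := (T + option ('I_r * layer r))%type.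

(* lab w i j = the vertex x^i_j of G' (x^i_0 = v_i = w i, x^i_r = u). *)
Definition lab (T : finType) r (w : 'I_r -> T) (i : 'I_r) (j : nat) : Vtx T r :=
  if j == 0 then inl (w i) else
  match insub j : option 'I_r with
  | Some k => match insub k : option (layer r) with
              | Some l => inr (Some (i, l))
              | None => inr None
              end
  | None => inr None
  end.

Definition webE (T : finType) r (w : 'I_r -> T) (x y : Vtx T r) : bool :=
  [exists i : 'I_r, exists j : 'I_r,
    [|| (x == lab w i j) && (y == lab w i j.+1),
        [&& 0 < val j, x == lab w i j & y == lab w (ordS i) j]
      | [&& 0 < val j, x == lab w (ord_pred i) j.-1 & y == lab w i j]]].

Definition attach_adj (T : finType) (e : rel T) r (w : 'I_r -> T) : rel (Vtx T r) :=
  fun x y => match x, y with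
             | inl a, inl b => e a b
             | _, _ => webE w x y || webE w y x
             end.

Definition is_old (T : finType) r (x : Vtx T r) : bool :=
  if x is inl _ then true else false.

From HB Require Import structures.
From mathcomp Require Import all_boot zify.
From Stdlib Require Import Classical_Prop.
Set Implicit Arguments. Unset Strict Implicit. Unset Printing Implicit Defensive.

(* Every walk of G' between vertices of G contracts to a walk of G that is no
   longer, and strictly shorter if it enters the web.  Cut the walk at its
   excursions into the web.  An excursion through the centre u climbs r layers
   on the way in, while the facial walk joins its two ends in fewer than r
   steps.  An excursion avoiding u is projected onto the facial walk, either
   along the spokes (x^i_j |-> v_i) or along the diagonals (x^i_j |-> v_{i-j});
   both projections map each web edge to an edge or a single vertex, and one of
   them collapses the first step of the excursion, which saves one edge. *)

Definition contracts (V T : Type) (E : rel V) (e : rel T) (P : pred V) (f : V -> T) :=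
  {in P &, forall x y, E x y -> f x = f y \/ e (f x) (f y)}.

Lemma path_contract (V T : Type) (E : rel V) (e : rel T) (P : pred V) (f : V -> T) :
  contracts E e P f -> forall x p, P x -> all P p -> path E x p ->
  exists q, [/\ path e (f x) q, last (f x) q = f (last x p) & size q <= size p].
Proof.
move=> fE x p; elim: p x => [|y p IH] x Px /=; first by exists [::].
case/andP=> Py Pp /andP[Exy yp]; have [q [qP lastq szq]] := IH y Py Pp yp.
case: (fE x y Px Py Exy) => [->|exy]; first by exists q; split=> //; apply: leqW.
by exists (f y :: q); split=> //=; rewrite exy.
Qed.

Lemma path_height (V : Type) (E : rel V) (h : V -> nat) :
  (forall x y, E x y -> h y <= (h x).+1) ->
  forall x p, path E x p -> h (last x p) <= h x + size p.
Proof.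
move=> hE x p; elim: p x => [|y p IH] x /=; first by rewrite addn0.
case/andP=> /hE hxy /IH hy; by rewrite addnS (leq_trans hy) // -addSn leq_add2r.
Qed.

Lemma exists_dist (V : Type) (E : rel V) x y p :
  path E x p -> last x p = y -> exists2 d, d <= size p & is_dist E x y d.
Proof.
have [n] := ubnP (size p); elim: n p => // n IH p /ltnSE szp xp lastp.
have [[p' [xp' lastp' shorter]]|noshorter] :=
  classic (exists p', [/\ path E x p', last x p' = y & size p' < size p]).
  have [d dp' dist] := IH p' (leq_trans shorter szp) xp' lastp'.
  by exists d => //; apply: leq_trans dp' (ltnW shorter).
exists (size p) => //; split; first by exists p.
move=> p' xp' lastp'; rewrite leqNgt; apply/negP => lt; apply: noshorter; by exists p'.
Qed.

Lemma iter_ordS_val r (i : 'I_r) n : val (iter n (@ordS r) i) = (i + n) %% r.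
Proof.
elim: n => [|n IH]; first by rewrite addn0 modn_small.
by rewrite iterS /= IH -addn1 modnDml addn1 addnS.
Qed.

Lemma split_first (A : Type) (p : pred A) s : has p s ->
  exists s1 x s2, [/\ s = s1 ++ x :: s2, p x & all (predC p) s1].
Proof.
elim: s => //= y s IH; case py: (p y) => /=; first by exists [::], y, s.
by case/IH=> s1 [x [s2 [-> px s1P]]]; exists (y :: s1), x, s2; rewrite /= py.
Qed.

Lemma is_dist_transfer (T V : Type) (e : rel T) (E : rel V) (f : T -> V) :
  (forall a q, path e a q -> path E (f a) (map f q)) ->
  (forall a b p, path E (f a) p -> last (f a) p = f b ->
     exists q, [/\ path e a q, last a q = b & size q <= size p]) ->
  forall a b d, is_dist e a b d <-> is_dist E (f a) (f b) d.
Proof.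
move=> f_path f_contract a b d; split=> [[[p [pP [lastp <-]]] p_min]|[[p [pP [lastp <-]]] p_min]].
  split; first by exists (map f p); rewrite f_path // last_map lastp size_map.
  by move=> p' /f_contract/[apply] -[q [qP lastq /(leq_trans (p_min q qP lastq))]].
have q_min q : path e a q -> last a q = b -> size p <= size q.
  by move=> qP lastq; rewrite -(size_map f); apply: p_min; rewrite ?f_path ?last_map ?lastq.
have [q [qP lastq szq]] := f_contract _ _ _ pP lastp.
split; first by exists q; split=> //; split=> //; apply/eqP; rewrite eqn_leq szq q_min.
exact: q_min.
Qed.

Section Web.

Variables (T : finType) (e : rel T) (r : nat) (w : 'I_r -> T).

Local Notation adj := (attach_adj e w).
Local Notation center := (inr None : Vtx T r).

Hypothesis e_sym : symmetric e.
Hypothesis w_closed : closed_walk e w.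

Lemma lab_old i j t : lab w i j = inl t -> j = 0 /\ t = w i.
Proof.
rewrite /lab; case: eqP => [-> [<-] //|_].
by case: insubP => [k _ _|_] //; case: insubP.
Qed.

Lemma lab_inner i j : 0 < j < r ->
  exists l : layer r, val (val l) = j /\ lab w i j = inr (Some (i, l)).
Proof.
case/andP=> j_gt0 j_ltr; rewrite /lab eqn0Ngt j_gt0.
case: insubP => [k _ kE|]; last by rewrite j_ltr.
case: insubP => [l _ lE|]; last by rewrite kE j_gt0.
by exists l; rewrite lE kE.
Qed.

Lemma lab_center (i : 'I_r) j : r <= j -> lab w i j = center.
Proof.
move=> r_le_j; have j_gt0 : 0 < j by apply: leq_trans r_le_j; apply: leq_ltn_trans (ltn_ord i).
rewrite /lab eqn0Ngt j_gt0; case: insubP => [k /= j_ltr _|//].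
by rewrite ltnNge r_le_j in j_ltr.
Qed.

Lemma lab_lt (i : 'I_r) j : lab w i j != center -> j < r.
Proof. by apply: contraR; rewrite -leqNgt => /(lab_center i) ->. Qed.

Definition height (x : Vtx T r) : nat :=
  match x with inl _ => 0 | inr (Some (_, l)) => val (val l) | inr None => r end.

Lemma height_lab i j : height (lab w i j) = minn j r.
Proof.
case: (posnP j) => [->|j_gt0]; first by rewrite min0n.
case: (ltnP j r) => [j_ltr|r_le_j]; last by rewrite lab_center.
have /(lab_inner i)[l [lj ->]] : 0 < j < r by rewrite j_gt0.
by rewrite /= lj.
Qed.

Lemma webE_cases x y : webE w x y ->
  exists (i : 'I_r) (j : nat), j < r /\
   [\/ x = lab w i j /\ y = lab w i j.+1,
       [/\ 0 < j, x = lab w i j & y = lab w (ordS i) j] |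
       [/\ 0 < j, x = lab w (ord_pred i) j.-1 & y = lab w i j]].
Proof.
case/existsP=> i /existsP[j H]; exists i, j; split=> //.
by case/or3P: H=> [/andP[/eqP-> /eqP->]|/and3P[? /eqP-> /eqP->]|/and3P[? /eqP-> /eqP->]];
  [constructor 1|constructor 2|constructor 3].
Qed.

Lemma adj_sym : symmetric adj.
Proof. by move=> [a|x] [b|y] //=; rewrite orbC. Qed.

Lemma height_adj x y : adj x y -> height y <= (height x).+1.
Proof.
have webE_height x' y' : webE w x' y' -> height y' <= (height x').+1 /\ height x' <= (height y').+1.
  by case/webE_cases=> i [j [_ [[-> ->]|[_ -> ->]|[_ -> ->]]]]; rewrite !height_lab; lia.
by case: x y => [a|x] [b|y] //= /orP[/webE_height[]|/webE_height[]].
Qed.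

Lemma webE_lab x y : webE w x y -> exists i j i' j', x = lab w i j /\ y = lab w i' j'.
Proof. by case/webE_cases=> i [j [_ [[-> ->]|[_ -> ->]|[_ -> ->]]]]; do 4 eexists. Qed.

Lemma adj_new_facial a y : ~~ is_old y -> adj (inl a) y -> exists i, a = w i.
Proof.
case: y => // y _ /orP[]/webE_lab[i [j [i' [j' [Ex Ey]]]]].
  by move: Ex => /esym/lab_old[_ ->]; exists i.
by move: Ey => /esym/lab_old[_ ->]; exists i'.
Qed.

Lemma facial_edge z : e (w (ord_pred z)) (w z).
Proof. by have := w_closed (ord_pred z); rewrite ord_predK. Qed.

(* [a0] is a junk value for the centre, which the projections are never applied to. *)
Definition spoke_proj (a0 : T) (x : Vtx T r) : T :=
  match x with inl t => t | inr (Some (i, _)) => w i | inr None => a0 end.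

Definition twist_proj (a0 : T) (x : Vtx T r) : T :=
  match x with
  | inl t => t
  | inr (Some (i, l)) => w (iter (val (val l)) (@ord_pred r) i)
  | inr None => a0
  end.

Lemma proj_lab a0 i j : j < r ->
  spoke_proj a0 (lab w i j) = w i /\ twist_proj a0 (lab w i j) = w (iter j (@ord_pred r) i).
Proof.
case: (posnP j) => [->|j_gt0] j_ltr //.
have /(lab_inner i)[l [lj ->]] : 0 < j < r by rewrite j_gt0.
by rewrite /= lj.
Qed.

Lemma webE_proj a0 x y : webE w x y -> y != center ->
  (spoke_proj a0 x = spoke_proj a0 y \/ e (spoke_proj a0 x) (spoke_proj a0 y)) /\
  (twist_proj a0 x = twist_proj a0 y \/ e (twist_proj a0 x) (twist_proj a0 y)).
Proof.
case/webE_cases=> i [j [j_ltr [[-> ->]|[j_gt0 -> ->]|[j_gt0 -> ->]]]] y_ncenter.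
- have [-> ->] := proj_lab a0 i j_ltr; have [-> ->] := proj_lab a0 i (lab_lt y_ncenter).
  by split; [left|right; rewrite iterS e_sym facial_edge].
- have [-> ->] := proj_lab a0 i j_ltr; have [-> ->] := proj_lab a0 (ordS i) j_ltr.
  split; first by right; apply: w_closed.
  case: j j_gt0 {j_ltr y_ncenter} => // j _; right.
  by rewrite [iter j.+1 _ (ordS i)]iterSr ordSK iterS facial_edge.
- have [-> ->] := proj_lab a0 (ord_pred i) (leq_ltn_trans (leq_pred j) j_ltr).
  have [-> ->] := proj_lab a0 i j_ltr.
  split; first by right; apply: facial_edge.
  by case: j j_gt0 {j_ltr y_ncenter} => // j _; rewrite iterSr; left.
Qed.

Lemma webE_contracts f : (forall t, f (inl t) = t) ->
  (forall x y, webE w x y -> y != center -> f x = f y \/ e (f x) (f y)) ->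
  contracts adj e (predC1 center) f.
Proof.
move=> f_old f_web.
have f_web_sym x y : webE w y x -> x != center -> f x = f y \/ e (f x) (f y).
  move=> /f_web fyx /fyx[->|eyx]; [by left|by right; rewrite e_sym].
move=> x y; rewrite !inE; case: x y => [a|x] [b|y] x_ncenter y_ncenter /=.
  by rewrite !f_old; right.
all: by case/orP=> [/f_web|/f_web_sym]; apply.
Qed.

Lemma spoke_contracts a0 : contracts adj e (predC1 center) (spoke_proj a0).
Proof. by apply: webE_contracts => // x y xy /(webE_proj a0 xy)[]. Qed.

Lemma twist_contracts a0 : contracts adj e (predC1 center) (twist_proj a0).
Proof. by apply: webE_contracts => // x y xy /(webE_proj a0 xy)[]. Qed.

(* The first step of an excursion goes from v_i to x^i_1 or from v_{i-1} to x^i_1. *)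
Lemma enter_web a0 a y : ~~ is_old y -> y != center -> adj (inl a) y ->
  a = spoke_proj a0 y \/ a = twist_proj a0 y.
Proof.
case: y => // y _ y_ncenter /orP[]/webE_cases[i [j [j_ltr]]].
  case=> [[/esym/lab_old[-> ->] Ey]|[j_gt0 /esym/lab_old[j0]]|[j_gt0 /esym/lab_old[j1 ->] Ey]].
  - by rewrite Ey in y_ncenter *; left; have [->] := proj_lab a0 i (lab_lt y_ncenter).
  - by rewrite j0 in j_gt0.
  - have j_eq1 : j = 1 by case: j j_gt0 j1 {j_ltr Ey} => // -[].
    rewrite j_eq1 in j_ltr Ey; rewrite Ey; right.
    by have [_ ->] := proj_lab a0 i j_ltr.
by case=> [[_ /esym/lab_old[]]|[j_gt0 _ /esym/lab_old[j0]]|[j_gt0 _ /esym/lab_old[j0]]] //;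
  rewrite j0 in j_gt0.
Qed.

Lemma facial_path_iter n i :
  exists q, [/\ path e (w i) q, last (w i) q = w (iter n (@ordS r) i) & size q = n].
Proof.
elim: n i => [|n IH] i; first by exists [::].
have [q [qP lastq szq]] := IH (ordS i).
by exists (w (ordS i) :: q); rewrite iterSr /= w_closed qP lastq szq.
Qed.

Lemma facial_path i k : exists q, [/\ path e (w i) q, last (w i) q = w k & size q < r].
Proof.
have r_gt0 : 0 < r by apply: leq_ltn_trans (ltn_ord i).
have [q [qP lastq szq]] := facial_path_iter ((k + (r - i)) %% r) i.
exists q; split=> //; last by rewrite szq ltn_mod.
rewrite lastq; congr (w _); apply: val_inj.
by rewrite iter_ordS_val modnDmr addnCA subnKC ?modnDr ?modn_small // ltnW.
Qed.

Lemma excursion_via_center a c ex : center \in ex ->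
  all (predC (@is_old T r)) ex -> path adj (inl a) (rcons ex (inl c)) ->
  exists q, [/\ path e a q, last a q = c & size q <= size ex].
Proof.
case/splitPr=> ex1 ex2 ex_new; rewrite rcons_cat cat_path rcons_cons /=.
case/andP=> ex1P /andP[center_ex2 ex2P].
have [i ->] : exists i, a = w i.
  case: ex1 ex1P ex_new center_ex2 => [|v ex1] /=.
    by move=> _ _; exact: (@adj_new_facial a center).
  by case/andP=> av _ /andP[v_new _] _; apply: adj_new_facial av.
have [k ->] : exists k, c = w k.
  have last_new : ~~ is_old (last center ex2).
    by apply: (allP ex_new); rewrite mem_cat mem_last orbT.
  by rewrite rcons_path in ex2P; case/andP: ex2P => _; rewrite adj_sym; apply: adj_new_facial.
have [q [qP lastq szq]] := facial_path i k; exists q; split=> //.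
have := path_height height_adj (x := inl a) (p := rcons ex1 center).
rewrite rcons_path ex1P center_ex2 last_rcons size_rcons /= => /(_ isT) r_le.
by rewrite size_cat /=; lia.
Qed.

Lemma excursion_off_center a c v ex :
  center \notin v :: ex -> all (predC (@is_old T r)) (v :: ex) ->
  path adj (inl a) (rcons (v :: ex) (inl c)) ->
  exists q, [/\ path e a q, last a q = c & size q <= size (v :: ex)].
Proof.
rewrite -has_pred1 -all_predC => /andP[v_ncenter ex_ncenter] /andP[v_new _] /= /andP[av vP].
have off_center : all (predC1 center) (rcons ex (inl c)) by rewrite all_rcons.
have [f [fv fc f_contracts]] :
    exists f, [/\ f v = a, f (inl c) = c & contracts adj e (predC1 center) f].
  have [->|->] := enter_web a v_new v_ncenter av.
    by exists (spoke_proj a); split; last exact: spoke_contracts.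
  by exists (twist_proj a); split; last exact: twist_contracts.
have [q [qP lastq szq]] := path_contract f_contracts v_ncenter off_center vP.
exists q; rewrite -fv -fc lastq last_rcons; split=> //.
by rewrite size_rcons in szq.
Qed.

Lemma excursion_contract a c ex :
  all (predC (@is_old T r)) ex -> path adj (inl a) (rcons ex (inl c)) ->
  exists q, [/\ path e a q, last a q = c & size q + (ex != [::]) <= (size ex).+1].
Proof.
case: ex => [|v ex]; first by rewrite /= andbT => _ ac; exists [:: c]; rewrite /= ac.
move=> ex_new exP; have [q [qP lastq szq]] : exists q,
    [/\ path e a q, last a q = c & size q <= size (v :: ex)].
  have [center_in|center_out] := boolP (center \in v :: ex).
    exact: excursion_via_center center_in ex_new exP.
  exact: excursion_off_center center_out ex_new exP.
by exists q; rewrite /= addn1.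
Qed.

Lemma walk_contract a b p : path adj (inl a) p -> last (inl a) p = inl b ->
  exists q, [/\ path e a q, last a q = b & size q + ~~ all (@is_old T r) p <= size p].
Proof.
have [n] := ubnP (size p); elim: n a p => // n IH a [|y p] /ltnSE szp pP lastp.
  by case: lastp => ->; exists [::].
have /split_first[ex [x [rest [Ep x_old ex_new]]]] : has (@is_old T r) (y :: p).
  by apply/hasP; exists (inl b) => //; rewrite -lastp /= mem_last.
case: x x_old Ep szp pP lastp => // c _ -> szp.
rewrite cat_path last_cat /= andbA -rcons_path => /andP[exP restP] lastp.
have [q1 [q1P last1 sz1]] := excursion_contract ex_new exP.
have [|q2 [q2P last2 sz2]] := IH c rest _ restP lastp.
  by apply: leq_trans szp; rewrite size_cat /= addnS ltnS leq_addl.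
exists (q1 ++ q2); rewrite cat_path last_cat q1P last1 q2P last2 !size_cat all_cat /=; split=> //.
have ex_old : ~~ all (@is_old T r) ex <= (ex != [::]) by case: (ex) => // *; apply: leq_b1.
move: sz1 sz2 ex_old.
case: (all (@is_old T r) ex) (all (@is_old T r) rest) (ex != [::]) => [] [] [] /=; lia.
Qed.

Lemma map_inl_path a q : path e a q -> path adj (inl a) (map inl q).
Proof. by elim: q a => //= b q IH a /andP[-> /IH]. Qed.

Lemma spoke_path i j : j <= r ->
  exists p, [/\ path adj (inl (w i)) p, last (inl (w i)) p = lab w i j & size p = j].
Proof.
elim: j => [|j IH] j_ler; first by exists [::].
have [p [pP lastp szp]] := IH (ltnW j_ler).
exists (rcons p (lab w i j.+1)); rewrite rcons_path pP lastp last_rcons size_rcons szp.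
split=> //; have spoke_edge : webE w (lab w i j) (lab w i j.+1).
  by apply/existsP; exists i; apply/existsP; exists (Ordinal j_ler); rewrite !eqxx.
case E: (lab w i j.+1) spoke_edge => [t|y]; first by case/lab_old: E.
by case: (lab w i j) => [a|x] /= ->.
Qed.

End Web.

Theorem lemma9 (T : finType) (e : rel T) (r : nat) (w : 'I_r -> T) :
  simple_graph e -> 3 <= r -> closed_walk e w ->
  (forall (a b : T) (d : nat),
      is_dist e a b d <-> is_dist (attach_adj e w) (inl a) (inl b) d) /\
  (forall (a b : T) (p : seq (Vtx T r)),
      path (attach_adj e w) (inl a) p -> last (inl a) p = inl b ->
      is_dist (attach_adj e w) (inl a) (inl b) (size p) ->
      all (@is_old T r) p) /\
  (forall (i : 'I_r) (j : nat), j <= r ->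
      exists (u : T) (d : nat),
        d <= r /\ is_dist (attach_adj e w) (inl u) (lab w i j) d).
Proof.
move=> [e_sym _] _ w_closed.
have contract := walk_contract e_sym w_closed.
split; [|split].
- apply: is_dist_transfer => [a q|a b p pP lastp]; first exact: map_inl_path.
  by have [q [qP lastq /(leq_trans (leq_addr _ _)) szq]] := contract a b p pP lastp; exists q.
- move=> a b p pP lastp [_ p_min]; apply/negPn/negP => p_new.
  have [q [qP lastq]] := contract a b p pP lastp; rewrite p_new addn1.
  have := p_min _ (map_inl_path w qP); rewrite last_map lastq size_map => /(_ erefl).
  by move=> le_pq /leq_trans/(_ le_pq); rewrite ltnn.
- move=> i j j_ler; have [p [pP lastp szp]] := spoke_path e w i j_ler.
  have [d d_le dist] := exists_dist pP lastp.
  by exists (w i), d; rewrite (leq_trans d_le) // szp.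
Qed.
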